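(* Let $\mathfrak M$ be a Banach manifold (modelled on $X$) with chart family $\mathscr A$, and $\mathfrak M_0$ (modelled on $X_0$) a $C^1$-embedded Banach submanifold of $\mathfrak M$ with respect to $\mathscr A$. Assume $(\mathfrak M,\mathfrak M_0,\mathscr A)$ is inward spreadable with an inner $C^1$-kernel $\mathfrak M_1$. Then for every $\eta\in\mathfrak M_0$ and any three $(\mathfrak M_0,\mathfrak M_1)$-regular local charts $(\mathcal U,\varphi),(\mathcal V,\psi),(\mathcal W,\chi)$ of $\mathfrak M$ at $\eta$, $$(\varphi\circ\chi^{-1})'(\chi(\eta))=(\varphi\circ\psi^{-1})'(\psi(\eta))\,(\psi\circ\chi^{-1})'(\chi(\eta))\quad\text{in }L(X),$$ and in particular $(\varphi\circ\psi^{-1})'(\psi(\eta))=\big[(\psi\circ\varphi^{-1})'(\varphi(\eta))\big]^{-1}$.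
   Context: Densely embedded spaces and the class $\mathfrak C^k$. For Banach spaces $X$ and $X_0$, $X_0$ is a densely embedded Banach subspace of $X$ if $X_0$ is a dense linear subspace of $X$ and there is $C>0$ with $\|x\|_X\le C\|x\|_{X_0}$ for $x\in X_0$. For such $X_0\subseteq X$, a Banach space $Y$, an open set $U_0\subseteq X_0$ and an integer $k\ge1$, $\mathfrak C^k(U_0;X,Y)$ denotes the set of maps $F:U_0\to Y$ such that (i) for each $x_0\in U_0$ there are bounded symmetric $j$-linear maps $F^{(j)}(x_0):X^j\to Y$, $1\le j\le k$, with $\|F(x)-F(x_0)-\sum_{j=1}^k\frac1{j!}F^{(j)}(x_0)(x-x_0,\dots,x-x_0)\|_Y/\|x-x_0\|_{X_0}^k\to0$ as $\|x-x_0\|_{X_0}\to0$, and (ii) $x\mapsto F^{(j)}(x)$ is continuous from $U_0$ (with the $X_0$-topology) into the space $L^j(X,Y)$ of bounded $j$-linear maps. We write $F'=F^{(1)}$. Embedded submanifolds. Let $\mathfrak M,\mathfrak M_0$ be topological Banach manifolds modelled on $X$, $X_0$, let $\mathscr A$ be a family of local charts of $\mathfrak M$, and $k\ge1$. $\mathfrak M_0$ is a $C^k$-embedded Banach submanifold of $\mathfrak M$ with respect to $\mathscr A$ if: (D1) $X_0$ is a densely embedded Banach subspace of $X$; (D2) $\mathfrak M_0\subseteq\mathfrak M$ and $\mathcal U\cap\mathfrak M_0$ is open in $\mathfrak M_0$ for every open $\mathcal U\subseteq\mathfrak M$; (D3) the domains of the charts of $\mathscr A$ cover $\mathfrak M$;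 (D4) for $\eta\in\mathfrak M_0$ and $(\mathcal U,\varphi)\in\mathscr A$ with $\eta\in\mathcal U$, $(\mathcal U_0,\varphi|_{\mathcal U_0})$ with $\mathcal U_0:=\mathcal U\cap\mathfrak M_0$ is a local chart of $\mathfrak M_0$; (D5) for $\eta\in\mathfrak M_0$ and $(\mathcal U,\varphi),(\mathcal V,\psi)\in\mathscr A$ with $\eta\in\mathcal U\cap\mathcal V$, $\psi\circ\varphi^{-1}\in\mathfrak C^k(\varphi(\mathcal U_0\cap\mathcal V_0);X,X)$ and $\varphi\circ\psi^{-1}\in\mathfrak C^k(\psi(\mathcal U_0\cap\mathcal V_0);X,X)$. A chart of $\mathscr A$ whose domain contains $\eta$ is an $\mathfrak M_0$-regular local chart at $\eta$. $(\mathfrak M,\mathfrak M_0,\mathscr A)$ (with $\mathfrak M_0$ $C^1$-embedded) is inward spreadable if there is a Banach manifold $\mathfrak M_1\subseteq\mathfrak M_0$, modelled on a Banach space $X_1$, which is a $C^1$-embedded Banach submanifold of $\mathfrak M_0$ with respect to the restrictions to $\mathfrak M_0$ of the charts of $\mathscr A$ ($\mathfrak M_1$ is then an inner $C^1$-kernel and the charts of $\mathscr A$ are called $(\mathfrak M_0,\mathfrak M_1)$-regular). For charts at $\eta\in\mathfrak M_0$, $(\varphi\circ\psi^{-1})'(\psi(\eta))\in L(X)$ is the first derivative in the $\mathfrak C^1$ sense. *)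

From HB Require Import structures.
From mathcomp Require Import all_boot all_order all_algebra.
From mathcomp Require Import all_classical all_reals all_analysis.
Set Implicit Arguments. Unset Strict Implicit. Unset Printing Implicit Defensive.
Import Order.TTheory GRing.Theory Num.Theory.
Import numFieldNormedType.Exports.
Local Open Scope classical_set_scope.
Local Open Scope ring_scope.

Section Defs.
Variable R : realType.

Definition bounded_linear (X Y : normedModType R) (L : X -> Y) : Prop :=
  (forall (a : R) (u v : X), L (a *: u + v) = a *: L u + L v) /\
  exists C : R, forall v, `|L v| <= C * `|v|.

(** (D1): X0 is a densely embedded Banach subspace of X; the inclusion
    X0 ⊆ X is represented by the injective linear map [iota]. *)
Definition densely_embedded (X X0 : normedModType R) (iota : X0 -> X) : Prop :=
  [/\ (forall (a : R) (u v : X0), iota (a *: u + v) = a *: iota u + iota v),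
      (forall u v, iota u = iota v -> u = v),
      dense (range iota) &
      exists2 C : R, 0 < C & forall x, `|iota x| <= C * `|x| ].

(** L is the first derivative, in the 𝔆^1 sense, at x0 of F : U0 -> Y
    (condition (i) with k = 1): the remainder is o(||x - x0||_{X0}). *)
Definition C1deriv_at (X X0 Y : normedModType R) (iota : X0 -> X)
    (U0 : set X0) (F : X0 -> Y) (x0 : X0) (L : X -> Y) : Prop :=
  bounded_linear L /\
  forall eps : R, 0 < eps -> exists2 delta : R, 0 < delta &
    forall x, U0 x -> `|x - x0| < delta ->
      `|F x - F x0 - L (iota (x - x0))| <= eps * `|x - x0|.

(** F ∈ 𝔆^1(U0; X, Y). Continuity of x |-> F'(x) from U0 (X0-topology)
    into L(X,Y) with the operator norm is written out explicitly. *)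
Definition frakC1 (X X0 Y : normedModType R) (iota : X0 -> X)
    (U0 : set X0) (F : X0 -> Y) : Prop :=
  exists D : X0 -> X -> Y,
    (forall x0, U0 x0 -> C1deriv_at iota U0 F x0 (D x0)) /\
    (forall x0, U0 x0 -> forall eps : R, 0 < eps -> exists2 delta : R, 0 < delta &
       forall x, U0 x -> `|x - x0| < delta ->
         forall v, `|D x v - D x0 v| <= eps * `|v|).

Definition local_chart (M : topologicalType) (X : normedModType R)
    (U : set M) (phi : M -> X) : Prop :=
  [/\ open U,
      (forall p q, U p -> U q -> phi p = phi q -> p = q),
      {within U, continuous phi} &
      forall O : set M, open O -> open (phi @` (U `&` O))].

Definition banach_manifold (M : topologicalType) (X : normedModType R) : Prop :=
  forall p : M, exists U (phi : M -> X), U p /\ local_chart U phi.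

Definition chart_family (M : topologicalType) (X : normedModType R)
    (A : set (set M * (M -> X))) : Prop :=
  forall c, A c -> local_chart c.1 c.2.

(** Domain φ(U0 ∩ V0) ⊆ X0 of the transition map ψ ∘ φ^{-1}
    (c = (U, φ), d = (V, ψ)); M0 ⊆ M is represented by the injection j. *)
Definition trans_dom (M M0 : topologicalType) (j : M0 -> M)
    (X X0 : normedModType R) (iota : X0 -> X)
    (c d : set M * (M -> X)) : set X0 :=
  [set x | exists m : M0, (c.1 `&` d.1) (j m) /\ iota x = c.2 (j m)].

(** F : X0 -> X is (a total extension of) the transition map ψ ∘ φ^{-1}
    on φ(U0 ∩ V0). *)
Definition is_transition (M M0 : topologicalType) (j : M0 -> M)
    (X X0 : normedModType R) (iota : X0 -> X)
    (c d : set M * (M -> X)) (F : X0 -> X) : Prop :=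
  forall (m : M0) (x : X0), (c.1 `&` d.1) (j m) -> iota x = c.2 (j m) ->
    F x = d.2 (j m).

Definition C1_embedded (M M0 : topologicalType) (j : M0 -> M)
    (X X0 : normedModType R) (iota : X0 -> X)
    (A : set (set M * (M -> X))) : Prop :=
  [/\ densely_embedded iota,
      (forall m m', j m = j m' -> m = m') /\
        (forall U : set M, open U -> open (j @^-1` U)),
      (forall p : M, exists2 c, A c & c.1 p),
      (forall (eta : M0) c, A c -> c.1 (j eta) ->
         exists phi0 : M0 -> X0,
           (forall m, c.1 (j m) -> iota (phi0 m) = c.2 (j m)) /\
           local_chart (j @^-1` c.1) phi0) &
      (forall (eta : M0) c d, A c -> A d -> c.1 (j eta) -> d.1 (j eta) ->
         (exists F, is_transition j iota c d F /\
                    frakC1 iota (trans_dom j iota c d) F) /\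
         (exists F, is_transition j iota d c F /\
                    frakC1 iota (trans_dom j iota d c) F)) ].

Definition restr_family (M M0 : topologicalType) (j : M0 -> M)
    (X X0 : normedModType R) (iota : X0 -> X)
    (A : set (set M * (M -> X))) : set (set M0 * (M0 -> X0)) :=
  [set c0 | exists2 c, A c &
     c0.1 = j @^-1` c.1 /\ forall m, c0.1 m -> iota (c0.2 m) = c.2 (j m)].

End Defs.

From HB Require Import structures.
From mathcomp Require Import all_boot all_order all_algebra.
From mathcomp Require Import all_classical all_reals all_analysis.
From mathcomp Require Import lra.
Set Implicit Arguments. Unset Strict Implicit. Unset Printing Implicit Defensive.
Import Order.TTheory GRing.Theory Num.Theory.
Import numFieldNormedType.Exports.
Local Open Scope classical_set_scope.
Local Open Scope ring_scope.

(* A 𝔆^1-derivative of a transition map is unique: its remainder is small on an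
   X0-ball, which pins it down on the dense range of X0 in X, and bounded linear
   maps agreeing on a dense set agree.  So it suffices to show that the
   composite transition map has derivative L_{φψ} ∘ L_{ψχ}.  The difficulty is
   that a 𝔆^1 remainder is only o(‖x - x0‖_{X0}), whereas the increment of the
   inner map is only controlled in X; continuity of x ↦ F'(x) into L(X),
   through a mean value inequality, upgrades the remainder of the outer map to
   o(‖·‖_X).  The inverse formula is the chain rule with χ = φ, whose
   transition map is the identity. *)

Section LinearMaps.
Variables (R : realType) (U W : normedModType R) (f : U -> W).
Hypothesis f_lin : forall (a : R) u v, f (a *: u + v) = a *: f u + f v.

Lemma linB u v : f (u - v) = f u - f v.
Proof. by rewrite addrC -scaleN1r f_lin scaleN1r addrC. Qed.

Lemma lin0 : f 0 = 0.
Proof. by rewrite -(subrr 0) linB subrr. Qed.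

Lemma linZ a u : f (a *: u) = a *: f u.
Proof. by rewrite -[a *: u]addr0 f_lin lin0 addr0. Qed.

End LinearMaps.

Section NormedSpaces.
Variable R : realType.
Implicit Types (U W : normedModType R).

Lemma open_norm_ball U (S : set U) (x : U) :
  open S -> S x -> exists2 d : R, 0 < d & forall y, `|y - x| < d -> S y.
Proof.
move=> oS Sx; have /nbhs_ballP [d d0 dS] := open_nbhs_nbhs (conj oS Sx).
by exists d => // y xy; apply: dS; rewrite -ball_normE /= distrC.
Qed.

Lemma ler_of_eps_mul (a b c : R) : 0 <= c ->
  (forall e, 0 < e -> a <= b + e * c) -> a <= b.
Proof.
move=> c0 abc; apply/ler_addgt0Pr => e e0.
have c1 : 0 < c + 1 by rewrite ltr_pwDr.
apply: le_trans (abc (e / (c + 1)) (divr_gt0 e0 c1)) _.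
by rewrite lerD2l mulrAC ler_pdivrMr // ler_wpM2l ?lerDl // ltW.
Qed.

Lemma bounded_linear_pos U W (f : U -> W) :
  bounded_linear f -> exists2 C : R, 0 < C & forall v, `|f v| <= C * `|v|.
Proof.
case=> _ [C fC]; exists (`|C| + 1); first by rewrite ltr_pwDr.
move=> v; apply: le_trans (fC v) _; rewrite ler_wpM2r //.
by rewrite (le_trans (ler_norm C)) // lerDl.
Qed.

Lemma bounded_linear_comp U (V : normedModType R) W (f : U -> V) (g : V -> W) :
  bounded_linear f -> bounded_linear g -> bounded_linear (g \o f).
Proof.
move=> bf bg; have [Cf Cf0 hf] := bounded_linear_pos bf.
have [Cg Cg0 hg] := bounded_linear_pos bg.
split; first by move=> a u v /=; rewrite bf.1 bg.1.
exists (Cg * Cf) => v; apply: le_trans (hg _) _.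
by rewrite -mulrA ler_wpM2l // ltW.
Qed.

Lemma bounded_linear_eq_on_dense U W (S : set U) (L1 L2 : U -> W) :
  dense S -> bounded_linear L1 -> bounded_linear L2 ->
  (forall u, S u -> L1 u = L2 u) -> forall v, L1 v = L2 v.
Proof.
move=> dS bL1 bL2 eqS v.
have [C1 C10 hC1] := bounded_linear_pos bL1.
have [C2 C20 hC2] := bounded_linear_pos bL2.
apply/eqP; rewrite -subr_eq0 -normr_le0.
apply: (ler_of_eps_mul (c := C1 + C2)); first by rewrite addr_ge0 // ltW.
move=> e e0; rewrite add0r.
have [u [vu Su]] := dS (ball v e) (ex_intro _ v (ballxx v e0)) (ball_open v e).
move: vu; rewrite -ball_normE /= => vu.
have -> : L1 v - L2 v = L1 (v - u) - L2 (v - u).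
  by rewrite (linB bL1.1) (linB bL2.1) (eqS u Su) opprB addrA subrK.
apply: le_trans (ler_normB _ _) _; apply: le_trans (lerD (hC1 _) (hC2 _)) _.
by rewrite -mulrDl mulrC ler_wpM2r ?addr_ge0 ?ltW.
Qed.

Lemma densely_embedded_bounded_linear U0 U (iota : U0 -> U) :
  densely_embedded iota -> bounded_linear iota.
Proof. by case=> iota_lin _ _ [C _ hC]; split => //; exists C. Qed.

End NormedSpaces.

Section UnitInterval.
Variables (R : realType) (V : normedModType R) (f : R -> V) (K : R).

Lemma ler_norm_increment (a b : R) : `|f a - f 0| <= K * a ->
  `|f b - f a| <= K * (b - a) -> `|f b - f 0| <= K * b.
Proof.
move=> fa fab; have -> : f b - f 0 = (f b - f a) + (f a - f 0).
  by rewrite addrA subrK.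
apply: le_trans (ler_normD _ _) _.
by rewrite (_ : K * b = K * (b - a) + K * a) ?lerD // -mulrDr subrK.
Qed.

(* The supremum of the points [s] with [|f s - f 0| <= K s] is attained and
   cannot lie below 1. *)
Lemma lipschitz_unit_interval_of_local :
  (forall s, 0 <= s <= 1 -> exists2 d, 0 < d & forall t, 0 <= t <= 1 ->
     `|t - s| < d -> `|f t - f s| <= K * `|t - s|) ->
  `|f 1 - f 0| <= K.
Proof.
move=> floc.
pose E := [set s : R | 0 <= s <= 1 /\ `|f s - f 0| <= K * s].
have E0 : E 0 by split; [rewrite lexx ler01 | rewrite subrr normr0 mulr0].
have supE : has_sup E by split; [exists 0 | exists 1 => s [/andP[]]].
pose s := sup E.
have s0 : 0 <= s := sup_upper_bound supE E0.
have s1 : s <= 1 by apply: ge_sup; [exists 0 | move=> t [/andP[]]].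
have [d d0 fd] := floc s (introT andP (conj s0 s1)).
have Es : E s.
  have [t Et st] := sup_adherent d0 supE.
  have ts : t <= s := sup_upper_bound supE Et.
  split; first by rewrite s0 s1.
  apply: (ler_norm_increment Et.2).
  rewrite distrC -[s - t]ger0_norm ?subr_ge0 // (distrC s t).
  apply: fd; first by case: Et.
  by rewrite distrC ger0_norm ?subr_ge0 // ltrBlDr -ltrBlDl.
have [s_lt1|] := ltrP s 1; last first.
  move=> s_ge1; have s_eq1 : s = 1 by apply/eqP; rewrite eq_le s1 s_ge1.
  by case: Es; rewrite s_eq1 mulr1.
pose t := Num.min 1 (s + d / 2).
have st : s < t by rewrite lt_min s_lt1 ltrDl divr_gt0.
have t1 : t <= 1 by rewrite ge_min lexx.
have t01 : 0 <= t <= 1 by rewrite t1 andbT (le_trans s0) // ltW.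
have ts : t - s < d.
  have : t <= s + d / 2 by rewrite ge_min lexx orbT.
  lra.
have Et : E t.
  split => //; apply: (ler_norm_increment Es.2).
  rewrite -[t - s]ger0_norm ?subr_ge0 ?(ltW st) //; apply: fd => //.
  by rewrite ger0_norm ?subr_ge0 ?(ltW st).
by have := sup_upper_bound supE Et; rewrite leNgt st.
Qed.

End UnitInterval.

Section C1Derivatives.
Variables (R : realType) (X X0 : normedModType R) (iota : X0 -> X).
Implicit Types (Y : normedModType R) (U : set X0).

Lemma C1deriv_at_ext Y U (F1 F2 : X0 -> Y) x0 (L : X -> Y) :
  (forall x, U x -> F1 x = F2 x) -> U x0 ->
  C1deriv_at iota U F1 x0 L -> C1deriv_at iota U F2 x0 L.
Proof.
move=> eqF x0U [bL dF]; split => // e e0.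
have [d d0 hd] := dF e e0; exists d => // x xU xx0.
by rewrite -(eqF x xU) -(eqF x0 x0U); apply: hd.
Qed.

Lemma frakC1_ext Y U (F1 F2 : X0 -> Y) :
  (forall x, U x -> F1 x = F2 x) -> frakC1 iota U F1 -> frakC1 iota U F2.
Proof.
move=> eqF [D [dF cD]]; exists D; split => // x0 x0U.
exact: C1deriv_at_ext eqF x0U (dF x0 x0U).
Qed.

Hypothesis iota_lin : forall (a : R) u v, iota (a *: u + v) = a *: iota u + iota v.

Lemma C1deriv_at_id U x0 : C1deriv_at iota U iota x0 id.
Proof.
split; first by split => //; exists 1 => v; rewrite mul1r.
move=> e e0; exists 1 => // x _ _.
by rewrite -(linB iota_lin) subrr normr0 mulr_ge0 // ltW.
Qed.

(* Apply [lipschitz_unit_interval_of_local] to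
   [s |-> F (x0 + s (y - x0)) - s D x0 (iota (y - x0))]. *)
Lemma C1deriv_mean_value Y U (F : X0 -> Y) (D : X0 -> X -> Y) x0 y (r eps : R) :
  (forall z, `|z - x0| < r -> U z) ->
  (forall z, U z -> C1deriv_at iota U F z (D z)) ->
  (forall z, `|z - x0| < r -> forall v, `|D z v - D x0 v| <= eps * `|v|) ->
  `|y - x0| < r ->
  `|F y - F x0 - D x0 (iota (y - x0))| <= eps * `|iota (y - x0)|.
Proof.
move=> ballU dF cD yx0; set h := y - x0.
have -> : y = x0 + h by rewrite /h addrC subrK.
apply: (ler_of_eps_mul (c := `|h|)) => // e e0.
pose g s := F (x0 + s *: h) - s *: D x0 (iota h).
have -> : F (x0 + h) - F x0 - D x0 (iota h) = g 1 - g 0.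
  by rewrite /g !scale1r !scale0r addr0 subr0 addrAC.
apply: lipschitz_unit_interval_of_local => s /andP[s0 s1].
have seg t : 0 <= t <= 1 -> `|(x0 + t *: h) - x0| < r.
  move=> /andP[t0 t1]; rewrite addrAC subrr add0r normrZ.
  by apply: le_lt_trans yx0; rewrite ger0_norm // ler_piMl.
have zU : U (x0 + s *: h) by apply/ballU/seg; rewrite s0 s1.
have [[Dlin _] dFz] := dF _ zU.
have [dl dl0 hdl] := dFz e e0.
have h1 : 0 < `|h| + 1 by rewrite ltr_pwDr.
exists (dl / (`|h| + 1)); first by rewrite divr_gt0.
move=> t t01 ts.
have dz : (x0 + t *: h) - (x0 + s *: h) = (t - s) *: h.
  by rewrite opprD addrACA subrr add0r scalerBl.
have -> : g t - g s = (F (x0 + t *: h) - F (x0 + s *: h) - D (x0 + s *: h) ((t - s) *: iota h))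
    + (D (x0 + s *: h) ((t - s) *: iota h) - (t - s) *: D x0 (iota h)).
  rewrite /g [RHS]addrA subrK scalerBl opprB [in RHS]opprB.
  by rewrite addrACA [RHS]addrACA (addrC (- _)).
apply: le_trans (ler_normD _ _) _; rewrite mulrDl [X in _ <= X]addrC; apply: lerD.
  rewrite -(linZ iota_lin) -dz; apply: le_trans (hdl _ (ballU _ (seg _ t01)) _) _.
    rewrite dz normrZ; apply: le_lt_trans (_ : _ <= `|t - s| * (`|h| + 1)) _.
      by rewrite ler_wpM2l // lerDl.
    by rewrite -ltr_pdivlMr.
  by rewrite dz normrZ [`|t - s| * _]mulrC mulrA.
rewrite (linZ Dlin) -scalerBr normrZ mulrC ler_wpM2r //.
by apply: cD; apply: seg; rewrite s0 s1.
Qed.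

Lemma C1deriv_at_eq_on_range Y U (F : X0 -> Y) x0 (r : R) (L1 L2 : X -> Y) :
  0 < r -> (forall z, `|z - x0| < r -> U z) ->
  C1deriv_at iota U F x0 L1 -> C1deriv_at iota U F x0 L2 ->
  forall w, L1 (iota w) = L2 (iota w).
Proof.
move=> r0 ballU [[L1lin _] dF1] [[L2lin _] dF2] w.
apply/eqP; rewrite -subr_eq0 -normr_le0.
apply: (ler_of_eps_mul (c := `|w| + `|w|)) => [|e e0]; first by rewrite addr_ge0.
have [d1 d10 hd1] := dF1 e e0; have [d2 d20 hd2] := dF2 e e0.
pose m := Num.min r (Num.min d1 d2).
have m0 : 0 < m by rewrite !lt_min r0 d10 d20.
pose s := m / (2 * (`|w| + 1)).
have s0 : 0 < s by rewrite divr_gt0 // mulr_gt0 // ltr_pwDr.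
have sw : `|(x0 + s *: w) - x0| < m.
  rewrite addrAC subrr add0r normrZ gtr0_norm // /s mulrAC.
  rewrite ltr_pdivrMr ?mulr_gt0 ?ltr_pwDr // ltr_pM2l //.
  by have := normr_ge0 w; lra.
have xU : U (x0 + s *: w) by apply/ballU/(lt_le_trans sw); rewrite ge_min lexx.
have md1 : m <= d1 by rewrite !ge_min lexx !orbT.
have md2 : m <= d2 by rewrite !ge_min lexx !orbT.
have R1 := hd1 _ xU (lt_le_trans sw md1).
have R2 := hd2 _ xU (lt_le_trans sw md2).
have : `|L1 (iota (s *: w)) - L2 (iota (s *: w))| <= s * (e * (`|w| + `|w|)).
  rewrite -[s *: w](addrK x0) (addrC (s *: w) x0).
  set q := F (x0 + s *: w) - F x0.
  have -> : L1 (iota (x0 + s *: w - x0)) - L2 (iota (x0 + s *: w - x0))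
      = (q - L2 (iota (x0 + s *: w - x0))) - (q - L1 (iota (x0 + s *: w - x0))).
    by rewrite opprB [RHS]addrC addrA subrK.
  apply: le_trans (ler_normB _ _) _.
  apply: le_trans (lerD R2 R1) _.
  rewrite addrAC subrr add0r normrZ gtr0_norm //.
  by rewrite !mulrDr mulrCA.
rewrite (linZ iota_lin) (linZ L1lin) (linZ L2lin) -scalerBr normrZ gtr0_norm //.
by rewrite ler_pM2l // add0r.
Qed.

End C1Derivatives.

Section DenseEmbedding.
Variables (R : realType) (X X0 : normedModType R) (iota : X0 -> X).
Hypothesis iota_dense : densely_embedded iota.
Implicit Types (Y : normedModType R) (U : set X0).

Lemma C1deriv_at_unique Y U (F : X0 -> Y) x0 (r : R) (L1 L2 : X -> Y) :
  0 < r -> (forall z, `|z - x0| < r -> U z) ->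
  C1deriv_at iota U F x0 L1 -> C1deriv_at iota U F x0 L2 ->
  forall v, L1 v = L2 v.
Proof.
case: iota_dense => iota_lin _ dense_range _ r0 ballU dL1 dL2.
apply: (bounded_linear_eq_on_dense dense_range dL1.1 dL2.1) => _ [w _ <-].
exact: (C1deriv_at_eq_on_range iota_lin r0 ballU dL1 dL2 w).
Qed.

(* The remainder is small relative to the ambient norm of [X], not only to
   the norm of [X0] as in [C1deriv_at]. *)
Definition ambient_deriv_at Y (F : X0 -> Y) (x0 : X0) (L : X -> Y) :=
  forall eps : R, 0 < eps -> exists2 r : R, 0 < r & forall y, `|y - x0| < r ->
    `|F y - F x0 - L (iota (y - x0))| <= eps * `|iota (y - x0)|.

Lemma frakC1_ambient_deriv_at Y U (F : X0 -> Y) x0 (r : R) (L : X -> Y) :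
  0 < r -> (forall z, `|z - x0| < r -> U z) ->
  frakC1 iota U F -> C1deriv_at iota U F x0 L -> ambient_deriv_at F x0 L.
Proof.
move=> r0 ballU [D [dF cD]] dL eps eps0.
have x0U : U x0 by apply: ballU; rewrite subrr normr0.
have DL := C1deriv_at_unique r0 ballU (dF x0 x0U) dL.
have [d d0 hd] := cD x0 x0U eps eps0.
have ler_r : Num.min r d <= r by rewrite ge_min lexx.
have ler_d : Num.min r d <= d by rewrite ge_min lexx orbT.
exists (Num.min r d) => [|y yx0]; first by rewrite lt_min r0 d0.
have [iota_lin _ _ _] := iota_dense.
rewrite -DL; apply: (C1deriv_mean_value iota_lin (r := Num.min r d)) dF _ yx0.
- by move=> z zx0; apply/ballU/(lt_le_trans zx0).
- by move=> z zx0; apply/hd/(lt_le_trans zx0) => //; apply/ballU/(lt_le_trans zx0).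
Qed.

End DenseEmbedding.

Section Composition.
Variables (R : realType) (X X0 : normedModType R) (iota : X0 -> X).
Hypothesis iota_bl : bounded_linear iota.
Implicit Types (Y : normedModType R) (U : set X0).

Lemma C1deriv_at_lipschitz Y U (G : X0 -> Y) x0 (L : X -> Y) :
  C1deriv_at iota U G x0 L -> exists2 C : R, 0 < C & exists2 d : R, 0 < d &
    forall x, U x -> `|x - x0| < d -> `|G x - G x0| <= C * `|x - x0|.
Proof.
move=> dG; have [Ci Ci0 hCi] := bounded_linear_pos iota_bl.
have [CL CL0 hCL] := bounded_linear_pos dG.1.
have [d d0 hd] := dG.2 1 ltr01.
exists (CL * Ci + 1); first by rewrite ltr_pwDr // mulr_ge0 // ltW.
exists d => // x xU xx0.
rewrite -[G x - G x0](subrK (L (iota (x - x0)))).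
apply: le_trans (ler_normD _ _) _; rewrite mulrDl addrC lerD ?hd //.
by apply: le_trans (hCL _) _; rewrite -mulrA ler_wpM2l ?(ltW CL0) ?hCi.
Qed.

(* In the application [y] is the second chart coordinate of the point with
   first coordinate [x]; the last hypothesis asks it to tend to [y0] in [X0]. *)
Lemma C1deriv_at_comp Y UG UK (G : X0 -> X) (H K : X0 -> Y) (x0 y0 : X0)
    (Lg : X -> X) (Lh : X -> Y) :
  C1deriv_at iota UG G x0 Lg -> bounded_linear Lh ->
  ambient_deriv_at iota H y0 Lh -> G x0 = iota y0 -> K x0 = H y0 ->
  (forall r : R, 0 < r -> exists2 d : R, 0 < d & forall x, `|x - x0| < d ->
     exists2 y, `|y - y0| < r & [/\ UG x, iota y = G x & K x = H y]) ->
  C1deriv_at iota UK K x0 (Lh \o Lg).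
Proof.
move=> dG bLh aH Gx0 Kx0 lift.
split=> [|eps eps0]; first exact: bounded_linear_comp dG.1 bLh.
have [Ch Ch0 hCh] := bounded_linear_pos bLh.
have [C C0 [dl dl0 hlip]] := C1deriv_at_lipschitz dG.
have epsC : 0 < eps / 2 / C by rewrite !divr_gt0.
have epsCh : 0 < eps / 2 / Ch by rewrite !divr_gt0.
have [r r0 hr] := aH _ epsC.
have [db db0 hdb] := dG.2 _ epsCh.
have [dy dy0 hdy] := lift r r0.
exists (Num.min dl (Num.min db dy)) => [|x _]; first by rewrite !lt_min dl0 db0 dy0.
rewrite !lt_min => /and3P[xdl xdb xdy].
have [y yy0 [xU Gx Kx]] := hdy x xdy.
have iy : iota (y - y0) = G x - G x0 by rewrite (linB iota_bl.1) Gx Gx0.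
rewrite Kx Kx0 /=.
have -> : H y - H y0 - Lh (Lg (iota (x - x0))) =
    (H y - H y0 - Lh (iota (y - y0))) + Lh (iota (y - y0) - Lg (iota (x - x0))).
  by rewrite (linB bLh.1) addrA subrK.
apply: le_trans (ler_normD _ _) _; rewrite (splitr eps) mulrDl lerD //.
  apply: le_trans (hr y yy0) _; rewrite iy.
  apply: le_trans (ler_wpM2l _ (hlip x xU xdl)) _; first exact: ltW.
  by rewrite mulrA divfK ?gt_eqF.
apply: le_trans (hCh _) _; rewrite iy.
apply: le_trans (ler_wpM2l (ltW Ch0) (hdb x xU xdb)) _.
by rewrite mulrA [Ch * _]mulrC divfK ?gt_eqF.
Qed.

End Composition.

Section Charts.
Variables (R : realType) (M0 : topologicalType) (X0 : normedModType R).

Lemma local_charts_nbhd (Uc Ud Ue : set M0) (phi0 psi0 : M0 -> X0) (eta : M0) :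
  local_chart Uc phi0 -> local_chart Ud psi0 -> open Ue ->
  Uc eta -> Ud eta -> Ue eta -> forall eps : R, 0 < eps ->
  exists2 delta : R, 0 < delta & forall x, `|x - phi0 eta| < delta ->
    exists m, [/\ Uc m, Ud m, Ue m, phi0 m = x & `|psi0 m - psi0 eta| < eps].
Proof.
move=> [_ _ _ phi0_open] [oUd _ psi0_cont _] oUe etac etad etae eps eps0.
rewrite continuous_open_subspace // in psi0_cont.
have oB := (continuous_inP psi0 oUd).1 psi0_cont _ (ball_open (psi0 eta) eps).
pose O := (Ud `&` psi0 @^-1` ball (psi0 eta) eps) `&` Ue.
have oO : open O by apply: openI.
have [delta delta0 hdelta] : exists2 delta : R, 0 < delta &
    forall x, `|x - phi0 eta| < delta -> (phi0 @` (Uc `&` O)) x.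
  by apply: open_norm_ball (phi0_open O oO) _; exists eta => //; do 3!split => //; exact: ballxx.
exists delta => // x /hdelta [m [mc [[md mb] me]] <-].
by exists m; split => //; move: mb; rewrite /= -ball_normE /= distrC.
Qed.

End Charts.

Section Transitions.
Variables (R : realType) (X X0 : normedModType R) (M M0 : topologicalType).
Variables (j : M0 -> M) (iota : X0 -> X).

Lemma is_transition_eq (c d : set M * (M -> X)) (F1 F2 : X0 -> X) :
  is_transition j iota c d F1 -> is_transition j iota c d F2 ->
  forall x, trans_dom j iota c d x -> F1 x = F2 x.
Proof. by move=> t1 t2 x [m [cdm xm]]; rewrite (t1 m x cdm xm) (t2 m x cdm xm). Qed.

Lemma trans_dom_ball (c e : set M * (M -> X)) (phi0 : M0 -> X0) (eta : M0) :
  (forall m, c.1 (j m) -> iota (phi0 m) = c.2 (j m)) ->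
  local_chart (j @^-1` c.1) phi0 -> open (j @^-1` e.1) ->
  c.1 (j eta) -> e.1 (j eta) ->
  exists2 r : R, 0 < r & forall z, `|z - phi0 eta| < r -> trans_dom j iota c e z.
Proof.
move=> phi0_val phi0_chart oe etac etae.
have [r r0 hr] := local_charts_nbhd phi0_chart phi0_chart oe etac etac etae ltr01.
exists r => // z /hr [m [mc _ me <- _]].
by exists m; split => //; rewrite phi0_val.
Qed.

End Transitions.

Lemma transition_deriv_comp (R : realType) (X X0 : normedModType R)
    (M M0 : topologicalType) (j : M0 -> M) (iota : X0 -> X)
    (A : set (set M * (M -> X))) (hA : chart_family A)
    (hemb : C1_embedded j iota A)
    (c d e : set M * (M -> X)) (hc : A c) (hd : A d) (he : A e) (eta : M0)
    (etac : c.1 (j eta)) (etad : d.1 (j eta)) (etae : e.1 (j eta))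
    (xc xd : X0) (hxc : iota xc = c.2 (j eta)) (hxd : iota xd = d.2 (j eta))
    (G H K : X0 -> X) (tG : is_transition j iota c d G)
    (tH : is_transition j iota d e H) (tK : is_transition j iota c e K)
    (Lcd Lde Lce : X -> X)
    (dG : C1deriv_at iota (trans_dom j iota c d) G xc Lcd)
    (dH : C1deriv_at iota (trans_dom j iota d e) H xd Lde)
    (dK : C1deriv_at iota (trans_dom j iota c e) K xc Lce) :
  forall v, Lce v = Lde (Lcd v).
Proof.
case: (hemb) => iota_dense [_ j_open] _ hD4 hD5.
have [_ iota_inj _ _] := iota_dense.
have [phi0 [phi0_val phi0_chart]] := hD4 eta c hc etac.
have [psi0 [psi0_val psi0_chart]] := hD4 eta d hd etad.
have phi0_eta : phi0 eta = xc by apply: iota_inj; rewrite phi0_val.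
have psi0_eta : psi0 eta = xd by apply: iota_inj; rewrite psi0_val.
have [oe _ _ _] := hA e he; have oje := j_open _ oe.
have [rc rc0 Uce] := trans_dom_ball phi0_val phi0_chart oje etac etae.
have [rd rd0 Ude] := trans_dom_ball psi0_val psi0_chart oje etad etae.
rewrite phi0_eta in Uce; rewrite psi0_eta in Ude.
have [[H' [tH' C1H']] _] := hD5 eta d e hd he etad etae.
have C1H := frakC1_ext (is_transition_eq tH' tH) C1H'.
have aH := frakC1_ambient_deriv_at iota_dense rd0 Ude C1H dH.
have dK' : C1deriv_at iota (trans_dom j iota c e) K xc (Lde \o Lcd).
  apply: (C1deriv_at_comp (densely_embedded_bounded_linear iota_dense) _ dG dH.1 aH).
  - by rewrite (tG eta xc (conj etac etad) hxc) hxd.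
  - by rewrite (tK eta xc (conj etac etae) hxc) (tH eta xd (conj etad etae) hxd).
  move=> r r0.
  have [delta delta0 hdelta] :=
    local_charts_nbhd phi0_chart psi0_chart oje etac etad etae r0.
  exists delta => // x; rewrite -phi0_eta => /hdelta [m [mc md me <- near_m]].
  exists (psi0 m); first by rewrite -psi0_eta.
  split.
  - by exists m; split; [split | exact: phi0_val].
  - by rewrite psi0_val // (tG m _ (conj mc md) (phi0_val m mc)).
  - by rewrite (tK m _ (conj mc me) (phi0_val m mc)) (tH m _ (conj md me) (psi0_val m md)).
by move=> v; rewrite (C1deriv_at_unique iota_dense rc0 Uce dK dK' v).
Qed.

Theorem lemma2p3 (R : realType)
    (X X0 X1 : completeNormedModType R)
    (M M0 M1 : topologicalType)
    (iota : X0 -> X) (j : M0 -> M) (iota1 : X1 -> X0) (j1 : M1 -> M0)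
    (A : set (set M * (M -> X)))
    (hM : banach_manifold M X) (hM0 : banach_manifold M0 X0)
    (hM1 : banach_manifold M1 X1)
    (hA : chart_family A)
    (hemb : C1_embedded j iota A)
    (hkernel : C1_embedded j1 iota1 (restr_family j iota A))
    (eta : M0)
    (cphi cpsi cchi : set M * (M -> X))
    (hphi : A cphi) (hpsi : A cpsi) (hchi : A cchi)
    (etaphi : cphi.1 (j eta)) (etapsi : cpsi.1 (j eta))
    (etachi : cchi.1 (j eta))
    (xphi xpsi xchi : X0)
    (hxphi : iota xphi = cphi.2 (j eta))
    (hxpsi : iota xpsi = cpsi.2 (j eta))
    (hxchi : iota xchi = cchi.2 (j eta))
    (Fphichi Fphipsi Fpsichi Fpsiphi : X0 -> X)
    (tphichi : is_transition j iota cchi cphi Fphichi)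
    (tphipsi : is_transition j iota cpsi cphi Fphipsi)
    (tpsichi : is_transition j iota cchi cpsi Fpsichi)
    (tpsiphi : is_transition j iota cphi cpsi Fpsiphi)
    (Lphichi Lphipsi Lpsichi Lpsiphi : X -> X)
    (dphichi : C1deriv_at iota (trans_dom j iota cchi cphi) Fphichi xchi Lphichi)
    (dphipsi : C1deriv_at iota (trans_dom j iota cpsi cphi) Fphipsi xpsi Lphipsi)
    (dpsichi : C1deriv_at iota (trans_dom j iota cchi cpsi) Fpsichi xchi Lpsichi)
    (dpsiphi : C1deriv_at iota (trans_dom j iota cphi cpsi) Fpsiphi xphi Lpsiphi) :
  (forall v : X, Lphichi v = Lphipsi (Lpsichi v)) /\
  (forall v : X, Lphipsi (Lpsiphi v) = v) /\
  (forall v : X, Lpsiphi (Lphipsi v) = v).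
Proof.
have [[iota_lin _ _ _] _ _ _ _] := hemb.
have id_trans c : is_transition j iota c c iota by move=> m x _.
split; first exact: (transition_deriv_comp hA hemb hchi hpsi hphi etachi etapsi
  etaphi hxchi hxpsi tpsichi tphipsi tphichi dpsichi dphipsi dphichi).
split=> v; symmetry.
- exact: (transition_deriv_comp hA hemb hphi hpsi hphi etaphi etapsi etaphi hxphi
    hxpsi tpsiphi tphipsi (id_trans _) dpsiphi dphipsi (C1deriv_at_id iota_lin _ _) v).
- exact: (transition_deriv_comp hA hemb hpsi hphi hpsi etapsi etaphi etapsi hxpsi
    hxphi tphipsi tpsiphi (id_trans _) dphipsi dpsiphi (C1deriv_at_id iota_lin _ _) v).
Qed.
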